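(* Let $S$ be a finite set of templates over schema $\mathbf{S}_E$ that have equality, and let $g\ge0$. If $\mathrm{coCSP}(S)$ is DLog-rewritable on instances of girth exceeding $g$, then it is DLog-rewritable.
   Context: Instances are finite sets of facts over a schema; a template is an instance. For a finite set $S$ of templates over $\mathbf{S}_E$, $\mathrm{coCSP}(S)$ is the Boolean query true on an $\mathbf{S}_E$-instance $I$ iff $I$ has no homomorphism to any $T\in S$. A template $T$ has equality if $\mathbf{S}_E$ contains a distinguished binary relation $\mathrm{eq}$ and $T$ interprets it as $\{(a,a)\mid a\in\mathrm{adom}(T)\}$. Girth: an instance has a cycle of length $n>0$ if it contains distinct facts $R_0(\mathbf{a}_0),\dots,R_{n-1}(\mathbf{a}_{n-1})$, $\mathbf{a}_i=a_{i,1}\cdots a_{i,m_i}$, and positions $p_i\neq p_i'$ of $R_i$ with $a_{i,p_i'}=a_{i\oplus1,p_{i\oplus1}}$ ($\oplus$ mod $n$); the girth is the length of a shortest cycle, $\omega$ if none. A Boolean Datalog program over EDB schema $\mathbf{S}_E$ is a finite set of rules $P(\mathbf{x})\leftarrow R_1(\mathbf{y}_1)\wedge\dots\wedge R_n(\mathbf{y}_n)$ (head variables in body) with a nullary goal relation not in bodies; head relations are IDB, the others from $\mathbf{S}_E$; $I\models\Gamma$ iff $\Gamma\cup I\models\mathrm{goal}()$. $\Gamma$ is a DLog-rewriting of $\mathrm{coCSP}(S)$ on instances of girth exceeding $g$ if $I\models\Gamma$ iff $\mathrm{coCSP}(S)$ is true on $I$ for every $\mathbf{S}_E$-instance $I$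 of girth $>g$; DLog-rewritable means this holds for all $\mathbf{S}_E$-instances for some $\Gamma$. *)

From Stdlib Require Import List Arith.
Import ListNotations.

Definition fact (Rel : Type) : Type := (Rel * list nat)%type.

Definition instance (Rel : Type) : Type := list (fact Rel).

Definition wf_inst {Rel : Type} (ar : Rel -> nat) (I : instance Rel) : Prop :=
  forall R a, In (R, a) I -> length a = ar R.

Definition in_adom {Rel : Type} (I : instance Rel) (c : nat) : Prop :=
  exists R a, In (R, a) I /\ In c a.

Definition is_hom {Rel : Type} (h : nat -> nat) (I J : instance Rel) : Prop :=
  forall R a, In (R, a) I -> In (R, map h a) J.

Definition hom_exists {Rel : Type} (I J : instance Rel) : Prop :=
  exists h : nat -> nat, is_hom h I J.

Definition coCSP {Rel : Type} (S : list (instance Rel)) (I : instance Rel) : Prop :=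
  forall T, In T S -> ~ hom_exists I T.

Definition has_equality {Rel : Type} (eqR : Rel) (T : instance Rel) : Prop :=
  forall a, In (eqR, a) T <-> exists c, a = [c; c] /\ in_adom T c.

(* A cycle of length n > 0: distinct facts F 0, ..., F (n-1) of I and
   positions p i <> p' i of F i with  (F i)_{p' i} = (F (i+1 mod n))_{p (i+1 mod n)}.
   Positions are 0-based. *)
Definition has_cycle {Rel : Type} (I : instance Rel) (n : nat) : Prop :=
  0 < n /\
  exists (F : nat -> fact Rel) (p p' : nat -> nat),
    (forall i, i < n -> In (F i) I) /\
    (forall i j, i < n -> j < n -> i <> j -> F i <> F j) /\
    (forall i, i < n ->
        p i < length (snd (F i)) /\ p' i < length (snd (F i)) /\ p i <> p' i) /\
    (forall i, i < n ->
        nth (p' i) (snd (F i)) 0 =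
        nth (p (S i mod n)) (snd (F (S i mod n))) 0).

Definition girth_gt {Rel : Type} (I : instance Rel) (g : nat) : Prop :=
  forall n, 0 < n -> n <= g -> ~ has_cycle I n.

(* IDB relation symbols are natural numbers; an atom in a rule body is either
   an EDB atom (inl R) or an IDB atom (inr P), applied to a list of variables
   (variables are natural numbers). *)
Record rule (Rel : Type) : Type := mkRule {
  head_rel : nat;
  head_vars : list nat;
  body : list ((Rel + nat) * list nat)
}.
Arguments head_rel {Rel}.
Arguments head_vars {Rel}.
Arguments body {Rel}.

Record program (Rel : Type) : Type := mkProgram {
  idb_ar : nat -> nat;
  goal : nat;
  rules : list (rule Rel)
}.
Arguments idb_ar {Rel}.
Arguments goal {Rel}.
Arguments rules {Rel}.

Definition atom_ar {Rel : Type} (ar : Rel -> nat) (G : program Rel)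
  (s : Rel + nat) : nat :=
  match s with inl R => ar R | inr P => idb_ar G P end.

Definition wf_program {Rel : Type} (ar : Rel -> nat) (G : program Rel) : Prop :=
  idb_ar G (goal G) = 0 /\
  forall r, In r (rules G) ->
    length (head_vars r) = idb_ar G (head_rel r) /\
    (forall s xs, In (s, xs) (body r) -> length xs = atom_ar ar G s) /\
    (forall s xs, In (s, xs) (body r) -> s <> inr (goal G)) /\
    (forall x, In x (head_vars r) ->
        exists s xs, In (s, xs) (body r) /\ In x xs).

Inductive derives {Rel : Type} (G : program Rel) (I : instance Rel) :
    nat -> list nat -> Prop :=
| derives_rule : forall (r : rule Rel) (nu : nat -> nat),
    In r (rules G) ->
    (forall R xs, In (inl R, xs) (body r) -> In (R, map nu xs) I) ->
    (forall P xs, In (inr P, xs) (body r) -> derives G I P (map nu xs)) ->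
    derives G I (head_rel r) (map nu (head_vars r)).

Definition models {Rel : Type} (I : instance Rel) (G : program Rel) : Prop :=
  derives G I (goal G) [].

Definition DLog_rewriting_girth {Rel : Type} (ar : Rel -> nat)
  (S : list (instance Rel)) (g : nat) (G : program Rel) : Prop :=
  forall I : instance Rel, wf_inst ar I -> girth_gt I g ->
    (models I G <-> coCSP S I).

Definition DLog_rewritable_girth {Rel : Type} (ar : Rel -> nat)
  (S : list (instance Rel)) (g : nat) : Prop :=
  exists G : program Rel, wf_program ar G /\ DLog_rewriting_girth ar S g G.

Definition DLog_rewritable {Rel : Type} (ar : Rel -> nat)
  (S : list (instance Rel)) : Prop :=
  exists G : program Rel, wf_program ar G /\
    forall I : instance Rel, wf_inst ar I -> (models I G <-> coCSP S I).

From Pilot Require Import Defs.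
From Stdlib Require Import List Arith Lia Bool Cantor ClassicalEpsilon.
Import ListNotations.

(* Stretch an instance [I]: replace each fact [R(c_1, ..., c_n)] by a fact
   [R(a_1, ..., a_n)] on fresh constants, and join each [a_j] to [c_j] by a path of
   [g+1] [eq]-facts (an arm).  Since [eq] is the diagonal in every template, a
   homomorphism from the stretch to a template collapses the arms, so the stretch and
   [I] map to the same templates; and a cycle of the stretch must run through whole
   arms, so it has length at least [2g+3].  Hence [Γ] decides [coCSP(S)] on
   stretched instances.  Finally [Γ] can be run on the stretch of [I] by a Datalog
   program over [I]: each constant of the stretch is a shape (a centre, or a position
   on a given arm of a given relation) together with a tuple of constants of [I], so
   every IDB relation of [Γ] is simulated by one IDB relation per choice of shapes of
   its arguments, and every rule by one rule per choice of shapes of its variables. *)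

Set Default Proof Using "Type".

Lemma map_nth_seq {A} (d : A) (ys : list A) :
  map (fun j => nth j ys d) (seq 0 (length ys)) = ys.
Proof.
  induction ys as [|y ys IH]; [reflexivity|].
  simpl. f_equal. rewrite <- seq_shift, map_map. exact IH.
Qed.

Lemma map_nth_seq_comp {A B} (f : A -> B) (d : A) (ys : list A) :
  map (fun j => f (nth j ys d)) (seq 0 (length ys)) = map f ys.
Proof. rewrite <- (map_nth_seq d ys) at 2. rewrite map_map. reflexivity. Qed.

Lemma nth_map_seq {B} (f : nat -> B) (n p : nat) (d : B) :
  p < n -> nth p (map f (seq 0 n)) d = f p.
Proof.
  intro Hp. rewrite nth_indep with (d' := f 0) by (rewrite length_map, length_seq; lia).
  rewrite map_nth, seq_nth by lia. reflexivity.
Qed.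

Lemma nth_map_lt {A B} (f : A -> B) (xs : list A) (m : nat) (d : B) (d0 : A) :
  m < length xs -> nth m (map f xs) d = f (nth m xs d0).
Proof.
  intro Hm. rewrite nth_indep with (d' := f d0) by (rewrite length_map; exact Hm).
  apply map_nth.
Qed.

Lemma flat_map_ext_in {A B} (f g : A -> list B) (xs : list A) :
  (forall x, In x xs -> f x = g x) -> flat_map f xs = flat_map g xs.
Proof.
  intro H. rewrite !flat_map_concat_map. f_equal. apply map_ext_in, H.
Qed.

Lemma flat_map_map {A B C} (f : B -> list C) (g : A -> B) (xs : list A) :
  flat_map f (map g xs) = flat_map (fun x => f (g x)) xs.
Proof. rewrite !flat_map_concat_map, map_map. reflexivity. Qed.

Lemma map_flat_map {A B C} (f : A -> list B) (g : B -> C) (xs : list A) :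
  map g (flat_map f xs) = flat_map (fun x => map g (f x)) xs.
Proof. rewrite !flat_map_concat_map, concat_map, map_map. reflexivity. Qed.

Lemma le_list_max (x : nat) (xs : list nat) : In x xs -> x <= list_max xs.
Proof.
  intro Hx. pose proof (proj1 (list_max_le xs (list_max xs)) (le_n _)) as Hall.
  rewrite Forall_forall in Hall. exact (Hall x Hx).
Qed.

Fixpoint index_of {A} (dec : forall x y : A, {x = y} + {x <> y}) (x : A) (xs : list A) : nat :=
  match xs with
  | [] => 0
  | y :: xs => if dec x y then 0 else S (index_of dec x xs)
  end.

Lemma nth_error_index_of {A} dec (x : A) (xs : list A) :
  In x xs -> nth_error xs (index_of dec x xs) = Some x.
Proof.
  induction xs as [|y xs IH]; intro Hx; [destruct Hx|].
  simpl. destruct (dec x y) as [->|Hne]; [reflexivity|].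
  apply IH. destruct Hx as [->|Hx]; [congruence|exact Hx].
Qed.

Fixpoint lists_over {A} (xs : list A) (n : nat) : list (list A) :=
  match n with
  | 0 => [[]]
  | S n => flat_map (fun a => map (cons a) (lists_over xs n)) xs
  end.

Lemma in_lists_over {A} (xs ys : list A) :
  (forall y, In y ys -> In y xs) -> In ys (lists_over xs (length ys)).
Proof.
  induction ys as [|y ys IH]; intro Hys; [left; reflexivity|].
  simpl. apply in_flat_map. exists y. split; [apply Hys; left; reflexivity|].
  apply in_map, IH. intros z Hz. apply Hys. right. exact Hz.
Qed.

Fixpoint code_list (xs : list nat) : nat :=
  match xs with
  | [] => 0
  | x :: xs => S (Cantor.to_nat (x, code_list xs))
  end.

Fixpoint decode_list_fuel (fuel n : nat) : list nat :=
  match fuel, n with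
  | S fuel, S n => let (x, m) := Cantor.of_nat n in x :: decode_list_fuel fuel m
  | _, _ => []
  end.

(* [n] is enough fuel: the code of a list exceeds the code of its tail. *)
Definition decode_list (n : nat) : list nat := decode_list_fuel n n.

Lemma decode_list_fuel_code (xs : list nat) (fuel : nat) :
  code_list xs <= fuel -> decode_list_fuel fuel (code_list xs) = xs.
Proof.
  revert fuel; induction xs as [|x xs IH]; intros fuel Hfuel.
  - destruct fuel; reflexivity.
  - destruct fuel as [|fuel]; [simpl in Hfuel; lia|].
    cbn -[Cantor.to_nat Cantor.of_nat]. rewrite Cantor.cancel_of_to. f_equal. apply IH.
    pose proof (Cantor.to_nat_non_decreasing x (code_list xs)).
    cbn -[Cantor.to_nat] in Hfuel. lia.
Qed.

Lemma decode_code_list (xs : list nat) : decode_list (code_list xs) = xs.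
Proof. apply decode_list_fuel_code. lia. Qed.

Lemma code_list_inj (xs ys : list nat) : code_list xs = code_list ys -> xs = ys.
Proof.
  intro H. rewrite <- (decode_code_list xs), <- (decode_code_list ys), H. reflexivity.
Qed.

Arguments code_list : simpl never.
Arguments decode_list : simpl never.

Lemma counter_period_ge (m n : nat) (psi : nat -> nat) :
  0 < n -> psi 0 < m -> (forall k, psi (S k) = S (psi k) mod m) -> psi n = psi 0 -> m <= n.
Proof.
  intros Hn H0 Hstep Hper.
  assert (Hpsi : forall k, psi k = (psi 0 + k) mod m).
  { induction k as [|k IH]; [rewrite Nat.add_0_r, Nat.mod_small; lia|].
    rewrite Hstep, IH, <- Nat.add_1_r, Nat.Div0.add_mod_idemp_l. f_equal. lia. }
  rewrite Hpsi in Hper. destruct (Nat.lt_ge_cases n m) as [Hlt|]; [|assumption].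
  destruct (Nat.lt_ge_cases (psi 0 + n) m).
  - rewrite Nat.mod_small in Hper; lia.
  - replace (psi 0 + n) with (psi 0 + n - m + 1 * m) in Hper by lia.
    rewrite Nat.Div0.mod_add, Nat.mod_small in Hper; lia.
Qed.

Definition rule_vars {Rel : Type} (r : rule Rel) : list nat :=
  head_vars r ++ flat_map snd (body r).

Lemma derives_in_adom {Rel : Type} (ar : Rel -> nat) (G : program Rel) (J : instance Rel)
    (P : nat) (args : list nat) :
  wf_program ar G -> derives G J P args -> forall a, In a args -> in_adom J a.
Proof.
  intros [_ Hwf] H. induction H as [r nu Hr HE HI IH]. intros a Ha.
  apply in_map_iff in Ha as [x [<- Hx]]. destruct (Hwf r Hr) as [_ [_ [_ Hsafe]]].
  destruct (Hsafe x Hx) as [[R|Q] [xs [Ha Hxa]]].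
  - exists R, (map nu xs). split; [exact (HE _ _ Ha)|apply in_map, Hxa].
  - exact (IH Q xs Ha _ (in_map nu _ _ Hxa)).
Qed.

Lemma rule_vars_in_adom {Rel : Type} (ar : Rel -> nat) (G : program Rel) (J : instance Rel)
    (r : rule Rel) (nu : nat -> nat) :
  wf_program ar G -> In r (rules G) ->
  (forall R xs, In (inl R, xs) (body r) -> In (R, map nu xs) J) ->
  (forall P xs, In (inr P, xs) (body r) -> derives G J P (map nu xs)) ->
  forall x, In x (rule_vars r) -> in_adom J (nu x).
Proof.
  intros HG Hr HE HIDB x Hx. apply in_app_or in Hx as [Hx|Hx].
  - exact (derives_in_adom ar G J _ _ HG (derives_rule G J r nu Hr HE HIDB) _ (in_map nu _ _ Hx)).
  - apply in_flat_map in Hx as [[[R|Q] xs] [Ha Hx]].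
    + exists R, (map nu xs). split; [exact (HE _ _ Ha)|apply in_map, Hx].
    + exact (derives_in_adom ar G J _ _ HG (HIDB Q xs Ha) _ (in_map nu _ _ Hx)).
Qed.

Section Stretch.

Context {Rel : Type} (ar : Rel -> nat) (eqR : Rel) (l : list Rel).
Variable Rdec : forall R R' : Rel, {R = R'} + {R <> R'}.
Hypothesis l_full : forall R, In R l.
Variable g : nat.
Local Notation L := (S g).

Definition rel_index (R : Rel) : nat := index_of Rdec R l.

Lemma nth_error_rel_index (R : Rel) : nth_error l (rel_index R) = Some R.
Proof using l_full. apply nth_error_index_of, l_full. Qed.

Lemma rel_index_inj (R R' : Rel) : rel_index R = rel_index R' -> R = R'.
Proof using l_full.
  intro H. pose proof (nth_error_rel_index R) as HR.
  rewrite H, nth_error_rel_index in HR. congruence.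
Qed.

Inductive shape := Center | Arm (rel pos dist : nat).

Definition shape_eq_dec (τ τ' : shape) : {τ = τ'} + {τ <> τ'}.
Proof. decide equality; apply Nat.eq_dec. Defined.

Definition mk_node (τ : shape) (w : list nat) : nat :=
  match τ with
  | Center => code_list [0; nth 0 w 0]
  | Arm i j t => code_list (1 :: i :: j :: t :: w)
  end.

Definition node_shape (a : nat) : shape :=
  match decode_list a with 1 :: i :: j :: t :: _ => Arm i j t | _ => Center end.

Definition node_tuple (a : nat) : list nat :=
  match decode_list a with 0 :: c :: _ => [c] | 1 :: _ :: _ :: _ :: ys => ys | _ => [] end.

Definition arm_shape (i j t : nat) : shape :=
  match t with 0 => Center | S _ => Arm i j t end.

Lemma arm_shape_pos (i j t : nat) : 1 <= t -> arm_shape i j t = Arm i j t.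
Proof. intro Ht. destruct t; [lia|reflexivity]. Qed.

(* The node at distance [t] from the centre on the [j]-th arm of the fact [R(ys)].
   The centre ([t = 0]) stands for the constant [nth j ys 0] and is shared by all
   arms ending there; the other nodes are private to the fact. *)
Definition arm_node (R : Rel) (ys : list nat) (j t : nat) : nat :=
  mk_node (arm_shape (rel_index R) j t) (match t with 0 => [nth j ys 0] | S _ => ys end).

Arguments arm_node : simpl never.

Definition stretched_fact (R : Rel) (ys : list nat) : Defs.fact Rel :=
  (R, map (fun j => arm_node R ys j L) (seq 0 (length ys))).

Definition arm_fact (R : Rel) (ys : list nat) (j s : nat) : Defs.fact Rel :=
  (eqR, [arm_node R ys j (s - 1); arm_node R ys j s]).

Definition stretch (I : instance Rel) : instance Rel :=
  flat_map (fun F => stretched_fact (fst F) (snd F) ::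
    flat_map (fun j => map (arm_fact (fst F) (snd F) j) (seq 1 L)) (seq 0 (length (snd F)))) I.

Lemma in_stretch (I : instance Rel) (F : Defs.fact Rel) :
  In F (stretch I) <-> exists R ys, In (R, ys) I /\
    (F = stretched_fact R ys \/
     exists j s, j < length ys /\ 1 <= s <= L /\ F = arm_fact R ys j s).
Proof.
  unfold stretch. rewrite in_flat_map. split.
  - intros [[R ys] [Hin HF]]. exists R, ys. split; [exact Hin|]. cbn [fst snd] in HF.
    destruct HF as [<-|HF]; [left; reflexivity|right].
    apply in_flat_map in HF as [j [Hj HF]]. apply in_map_iff in HF as [s [<- Hs]].
    apply in_seq in Hj, Hs. exists j, s. repeat split; lia.
  - intros [R [ys [Hin HF]]]. exists (R, ys). split; [exact Hin|].
    destruct HF as [->|[j [s [Hj [Hs ->]]]]]; [left; reflexivity|right].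
    apply in_flat_map. exists j. split; [apply in_seq; simpl; lia|].
    apply in_map, in_seq. lia.
Qed.

Lemma node_shape_mk_node (τ : shape) (w : list nat) : node_shape (mk_node τ w) = τ.
Proof. destruct τ; unfold node_shape, mk_node; rewrite decode_code_list; reflexivity. Qed.

Lemma node_shape_arm_node R ys j t :
  node_shape (arm_node R ys j t) = arm_shape (rel_index R) j t.
Proof. apply node_shape_mk_node. Qed.

Lemma node_tuple_arm_node R ys j t :
  node_tuple (arm_node R ys j t) = match t with 0 => [nth j ys 0] | S _ => ys end.
Proof. unfold node_tuple, arm_node. destruct t; simpl; rewrite decode_code_list; reflexivity. Qed.

Lemma arm_node_pos R ys j t : 1 <= t -> arm_node R ys j t = mk_node (Arm (rel_index R) j t) ys.
Proof. intro Ht. destruct t; [lia|reflexivity]. Qed.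

Lemma arm_node_inj R ys j t R' ys' j' t' : 1 <= t -> 1 <= t' ->
  arm_node R ys j t = arm_node R' ys' j' t' -> R = R' /\ ys = ys' /\ j = j' /\ t = t'.
Proof using l_full.
  intros Ht Ht' H. destruct t as [|t]; [lia|]. destruct t' as [|t']; [lia|].
  apply code_list_inj in H. injection H as HR -> -> ->.
  apply rel_index_inj in HR. auto.
Qed.

Lemma center_neq_arm_node R ys j R' ys' j' t' :
  1 <= t' -> arm_node R ys j 0 <> arm_node R' ys' j' t'.
Proof.
  intros Ht' H. destruct t' as [|t']; [lia|]. apply code_list_inj in H. discriminate.
Qed.

Lemma length_stretched_fact R ys : length (snd (stretched_fact R ys)) = length ys.
Proof. simpl. rewrite length_map, length_seq. reflexivity. Qed.

Lemma nth_stretched_fact R ys p :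
  p < length ys -> nth p (snd (stretched_fact R ys)) 0 = arm_node R ys p L.
Proof. apply (nth_map_seq (fun j => arm_node R ys j L)). Qed.

Lemma wf_stretch (I : instance Rel) : ar eqR = 2 -> wf_inst ar I -> wf_inst ar (stretch I).
Proof.
  intros Heq HI R a Hin. apply in_stretch in Hin as [R0 [ys [Hin [HF|[j [s [_ [_ HF]]]]]]]].
  - injection HF as -> ->. rewrite length_map, length_seq. exact (HI _ _ Hin).
  - injection HF as -> ->. rewrite Heq. reflexivity.
Qed.

(** * Homomorphisms to templates with equality *)

Definition node_base (a : nat) : nat :=
  nth (match node_shape a with Center => 0 | Arm _ j _ => j end) (node_tuple a) 0.

Lemma node_base_arm_node R ys j t : node_base (arm_node R ys j t) = nth j ys 0.
Proof.
  unfold node_base. rewrite node_shape_arm_node, node_tuple_arm_node.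
  destruct t; reflexivity.
Qed.

Lemma hom_stretch_of_hom (I T : instance Rel) (h : nat -> nat) :
  has_equality eqR T -> is_hom h I T -> is_hom (fun a => h (node_base a)) (stretch I) T.
Proof.
  intros HT Hh R a Hin. apply in_stretch in Hin as [R0 [ys [Hin [HF|[j [s [Hj [_ HF]]]]]]]].
  - injection HF as -> ->. rewrite map_map.
    erewrite map_ext by (intro; rewrite node_base_arm_node; reflexivity).
    rewrite map_nth_seq_comp. exact (Hh _ _ Hin).
  - injection HF as -> ->. simpl. rewrite !node_base_arm_node.
    apply HT. exists (h (nth j ys 0)). split; [reflexivity|].
    exists R0, (map h ys). split; [exact (Hh _ _ Hin)|]. apply in_map, nth_In, Hj.
Qed.

Lemma hom_of_hom_stretch (I T : instance Rel) (h : nat -> nat) :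
  has_equality eqR T -> is_hom h (stretch I) T ->
  is_hom (fun c => h (mk_node Center [c])) I T.
Proof.
  intros HT Hh R ys Hin.
  assert (Harm : forall j s, j < length ys -> s <= L ->
            h (arm_node R ys j s) = h (arm_node R ys j 0)).
  { intros j s Hj. induction s as [|s IH]; intro Hs; [reflexivity|].
    assert (HF : In (arm_fact R ys j (S s)) (stretch I)).
    { apply in_stretch. exists R, ys. split; [exact Hin|].
      right. exists j, (S s). repeat split; lia. }
    apply Hh, HT in HF as [c [Hc _]]. injection Hc as H1 H2.
    rewrite Nat.sub_0_r in H1. rewrite H2, <- H1. apply IH. lia. }
  assert (HF : In (stretched_fact R ys) (stretch I)).
  { apply in_stretch. exists R, ys. split; [exact Hin|]. left. reflexivity. }
  apply Hh in HF. simpl in HF. rewrite map_map in HF.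
  rewrite <- (map_nth_seq_comp (fun c => h (mk_node Center [c])) 0 ys).
  erewrite map_ext_in; [exact HF|].
  intros j Hj. apply in_seq in Hj. simpl. rewrite Harm by lia. reflexivity.
Qed.

Lemma coCSP_stretch (S : list (instance Rel)) (I : instance Rel) :
  (forall T, In T S -> has_equality eqR T) -> coCSP S (stretch I) <-> coCSP S I.
Proof.
  intro HS. split; intros H T HT [h Hh]; apply (H T HT).
  - exists (fun a => h (node_base a)). apply hom_stretch_of_hom; auto.
  - exists (fun c => h (mk_node Center [c])). apply hom_of_hom_stretch; auto.
Qed.

(** * Girth *)

(* Entering a fact of the stretch by position [p] puts a walk at this phase on a
   cycle of length [2L+1]: a stretched fact has phase 0, the arm fact at level [s]
   has phase [L+s] when entered from its inner node and [L+1-s] from its outer one. *)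
Definition phase (F : Defs.fact Rel) (p : nat) : nat :=
  match node_shape (nth 0 (snd F) 0) with
  | Center => if p =? 0 then L + 1 else L
  | Arm _ _ t => if t <? L then (if p =? 0 then L + t + 1 else L - t) else 0
  end.

Lemma phase_lt (F : Defs.fact Rel) (p : nat) : phase F p < 2 * L + 1.
Proof.
  unfold phase. destruct (node_shape _) as [|i j t]; [destruct (p =? 0); lia|].
  destruct (Nat.ltb_spec t L); [destruct (p =? 0)|]; lia.
Qed.

Lemma phase_stretched_fact R ys p : ys <> [] -> phase (stretched_fact R ys) p = 0.
Proof.
  intro Hys. unfold phase.
  rewrite nth_stretched_fact by (destruct ys; [congruence|simpl; lia]).
  rewrite node_shape_arm_node, arm_shape_pos, Nat.ltb_irrefl by lia. reflexivity.
Qed.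

Lemma phase_arm_fact R ys j s p : 1 <= s <= L ->
  phase (arm_fact R ys j s) p = if p =? 0 then L + s else L + 1 - s.
Proof.
  intro Hs. unfold phase, arm_fact. simpl nth. rewrite node_shape_arm_node.
  destruct (s - 1) as [|t] eqn:Et; simpl arm_shape.
  - replace s with 1 by lia. destruct (p =? 0); lia.
  - cbv iota. replace (S t <? L) with true by (symmetry; apply Nat.ltb_lt; lia).
    destruct (p =? 0); lia.
Qed.

Lemma arm_node_occurrence I F q R ys j t :
  In F (stretch I) -> q < length (snd F) -> 1 <= t -> nth q (snd F) 0 = arm_node R ys j t ->
  (F = stretched_fact R ys /\ t = L) \/ (F = arm_fact R ys j t /\ q = 1) \/
  (F = arm_fact R ys j (S t) /\ q = 0 /\ t < L).
Proof using l_full.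
  intros HF Hq Ht E. apply in_stretch in HF as [R' [ys' [_ [->|[j' [s [_ [Hs ->]]]]]]]].
  - rewrite length_stretched_fact in Hq. rewrite nth_stretched_fact in E by exact Hq.
    apply arm_node_inj in E as [-> [-> [_ ->]]]; [auto|lia|lia].
  - destruct q as [|[|q]]; simpl in Hq, E; [| |lia].
    + destruct (s - 1) as [|t'] eqn:Es; [apply center_neq_arm_node in E; [contradiction|lia]|].
      apply arm_node_inj in E as [-> [-> [-> Et]]]; [|lia|lia].
      right; right. replace s with (S t) by lia. repeat split; lia.
    + apply arm_node_inj in E as [-> [-> [-> ->]]]; [|lia|lia]. auto.
Qed.

Lemma center_occurrence I F q R ys j :
  In F (stretch I) -> q < length (snd F) -> nth q (snd F) 0 = arm_node R ys j 0 ->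
  q = 0 /\ exists R' ys' j', F = arm_fact R' ys' j' 1.
Proof.
  intros HF Hq E. apply in_stretch in HF as [R' [ys' [_ [->|[j' [s [_ [Hs ->]]]]]]]].
  - rewrite length_stretched_fact in Hq. rewrite nth_stretched_fact in E by exact Hq.
    symmetry in E. apply center_neq_arm_node in E; [contradiction|lia].
  - destruct q as [|[|q]]; simpl in Hq, E; [| |lia].
    + destruct (s - 1) as [|t'] eqn:Es.
      * split; [reflexivity|]. exists R', ys', j'. f_equal. lia.
      * symmetry in E. apply center_neq_arm_node in E; [contradiction|lia].
    + symmetry in E. apply center_neq_arm_node in E; [contradiction|lia].
Qed.

Lemma stretch_fact_nodup I F p p' :
  In F (stretch I) -> p < length (snd F) -> p' < length (snd F) -> p <> p' ->
  nth p (snd F) 0 <> nth p' (snd F) 0.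
Proof using l_full.
  intros HF Hp Hp' Hpp E. apply in_stretch in HF as [R [ys [_ [->|[j [s [_ [Hs ->]]]]]]]].
  - rewrite length_stretched_fact in Hp, Hp'. rewrite !nth_stretched_fact in E by assumption.
    apply arm_node_inj in E; lia.
  - simpl in Hp, Hp'.
    destruct p as [|[|p]], p' as [|[|p']]; simpl in E; try lia;
      destruct (s - 1) as [|t] eqn:Es;
      first [ apply center_neq_arm_node in E; lia
            | symmetry in E; apply center_neq_arm_node in E; lia
            | apply arm_node_inj in E; lia ].
Qed.

Lemma phase_step I F F' p p' q :
  In F (stretch I) -> In F' (stretch I) -> F <> F' ->
  p < length (snd F) -> p' < length (snd F) -> p <> p' -> q < length (snd F') ->
  nth p' (snd F) 0 = nth q (snd F') 0 -> phase F' q = S (phase F p) mod (2 * L + 1).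
Proof using l_full.
  intros HF HF' Hne Hp Hp' Hpp Hq E.
  assert (Hsucc : forall v, v < 2 * L -> S v mod (2 * L + 1) = S v)
    by (intros v Hv; apply Nat.mod_small; lia).
  pose proof HF as HFs. apply in_stretch in HFs as [R [ys [_ [->|[j [s [Hj [Hs ->]]]]]]]].
  - rewrite length_stretched_fact in Hp, Hp'. rewrite nth_stretched_fact in E by exact Hp'.
    symmetry in E. rewrite phase_stretched_fact by (destruct ys; simpl in Hp; [lia|congruence]).
    destruct (arm_node_occurrence I F' q R ys p' L HF' Hq ltac:(lia) E)
      as [[-> _]|[[-> ->]|[_ [_ HL]]]]; [congruence| |lia].
    rewrite phase_arm_fact by lia. rewrite Hsucc; cbn [Nat.eqb]; lia.
  - simpl in Hp, Hp'. destruct p as [|[|p]], p' as [|[|p']]; simpl in E; try lia.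
    + rewrite phase_arm_fact by lia. cbn [Nat.eqb]. symmetry in E.
      destruct (arm_node_occurrence I F' q R ys j s HF' Hq (proj1 Hs) E)
        as [[-> ->]|[[-> _]|[-> [-> HsL]]]]; [|congruence|].
      * rewrite phase_stretched_fact by (destruct ys; simpl in Hj; [lia|congruence]).
        replace (S (L + L)) with (1 * (2 * L + 1)) by lia. rewrite Nat.Div0.mod_mul. reflexivity.
      * rewrite phase_arm_fact by lia. rewrite Hsucc by lia. cbn [Nat.eqb]. lia.
    + rewrite phase_arm_fact by lia. cbn [Nat.eqb]. symmetry in E.
      destruct (s - 1) as [|t] eqn:Es.
      * destruct (center_occurrence I F' q R ys j HF' Hq E) as [-> [R' [ys' [j' ->]]]].
        rewrite phase_arm_fact by lia. rewrite Hsucc by lia. cbn [Nat.eqb]. lia.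
      * destruct (arm_node_occurrence I F' q R ys j (S t) HF' Hq ltac:(lia) E)
          as [[_ HtL]|[[-> ->]|[HF'' _]]]; [lia| |].
        -- rewrite phase_arm_fact by lia. rewrite Hsucc by lia. cbn [Nat.eqb]. lia.
        -- exfalso. apply Hne. rewrite HF''. f_equal. lia.
Qed.

Lemma girth_stretch (I : instance Rel) : girth_gt (stretch I) g.
Proof using l_full.
  intros n Hn Hng [_ [F [p [p' [HFin [Hdist [Hpos Hcyc]]]]]]].
  destruct (Nat.eq_dec n 1) as [->|Hn1].
  - destruct (Hpos 0 Hn) as [Hp [Hp' Hpp]].
    exact (stretch_fact_nodup I (F 0) (p' 0) (p 0) (HFin 0 Hn) Hp' Hp
             (not_eq_sym Hpp) (Hcyc 0 Hn)).
  - set (psi k := phase (F (k mod n)) (p (k mod n))).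
    enough (2 * L + 1 <= n) by lia.
    apply (counter_period_ge _ n psi Hn); [apply phase_lt| |].
    + intro k. unfold psi.
      replace (S k mod n) with (S (k mod n) mod n)
        by (rewrite <- (Nat.add_1_r k), <- (Nat.add_1_r (k mod n)), Nat.Div0.add_mod_idemp_l;
            reflexivity).
      set (i := k mod n). assert (Hi : i < n) by (apply Nat.mod_upper_bound; lia).
      assert (Hi' : S i mod n < n) by (apply Nat.mod_upper_bound; lia).
      destruct (Hpos i Hi) as [Hp [Hp' Hpp]]. destruct (Hpos _ Hi') as [Hq _].
      apply (phase_step I (F i) _ (p i) (p' i)); auto.
      apply Hdist; auto. intro E.
      destruct (Nat.eq_dec (S i) n) as [E2|E2].
      * rewrite E2, Nat.Div0.mod_same in E. lia.
      * rewrite Nat.mod_small in E; lia.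
    + unfold psi. rewrite Nat.Div0.mod_same, Nat.Div0.mod_0_l. reflexivity.
Qed.

(** * Simulating a Datalog program on the stretch *)

Variable G : program Rel.
Hypothesis G_wf : wf_program ar G.

Local Notation atom := ((Rel + nat) * list nat)%type.

Definition width (τ : shape) : nat :=
  match τ with
  | Center => 1
  | Arm i _ _ => match nth_error l i with Some R => ar R | None => 0 end
  end.

Lemma width_arm R j t : width (Arm (rel_index R) j t) = ar R.
Proof using l_full. simpl. rewrite nth_error_rel_index. reflexivity. Qed.

(* A node of shape [τ] is represented in [I] by the [width τ] constants of its
   [node_tuple]; a variable [x] of [G], once guessed to range over nodes of shape
   [σ x], becomes the variables [cell x k] with [k < width (σ x)]. *)
Definition cell (x k : nat) : nat := code_list [x; k].

Definition tuple_vars (x w : nat) : list nat := map (cell x) (seq 0 w).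

Definition node_vars (σ : nat -> shape) (x : nat) : list nat := tuple_vars x (width (σ x)).

Definition args_vars (σ : nat -> shape) (xs : list nat) : list nat := flat_map (node_vars σ) xs.

Definition read_node (ν : nat -> nat) (σ : nat -> shape) (x : nat) : nat :=
  mk_node (σ x) (map ν (node_vars σ x)).

Fixpoint decode_args (τs : list shape) (args : list nat) : list nat :=
  match τs with
  | [] => []
  | τ :: τs => mk_node τ (firstn (width τ) args) :: decode_args τs (skipn (width τ) args)
  end.

Definition shape_code (τ : shape) : nat :=
  match τ with Center => code_list [0] | Arm i j t => code_list [1; i; j; t] end.

Definition shape_decode (n : nat) : shape :=
  match decode_list n with [1; i; j; t] => Arm i j t | _ => Center end.

Definition same_sym : nat := code_list [0].

Definition idb_sym (P : nat) (τs : list shape) : nat := code_list (1 :: P :: map shape_code τs).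

Definition sim_idb_ar (Q : nat) : nat :=
  match decode_list Q with
  | 1 :: _ :: cs => list_sum (map (fun c => width (shape_decode c)) cs)
  | _ => 2
  end.

Definition same_atom (a b : nat) : atom := (inr same_sym, [a; b]).

(* An EDB atom of [G] is translated into an [I]-fact [R (tuple_vars z (ar R))]
   together with a list of pairs of variables that must be equal. *)
Definition match_atoms (m : Rel * nat * list (nat * nat)) : list atom :=
  let '(R, z, links) := m in
  (inl R, tuple_vars z (ar R)) :: map (fun '(a, b) => same_atom a b) links.

Definition match_stretched (σ : nat -> shape) (R : Rel) (xs : list nat)
    : option (Rel * nat * list (nat * nat)) :=
  if list_eq_dec shape_eq_dec (map σ xs) (map (fun m => Arm (rel_index R) m L) (seq 0 (length xs)))
  then let z := nth 0 xs 0 in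
       Some (R, z, flat_map (fun x => map (fun k => (cell x k, cell z k)) (seq 0 (ar R))) xs)
  else None.

Definition match_arm (σ : nat -> shape) (x y : nat) : option (Rel * nat * list (nat * nat)) :=
  match σ y with
  | Center => None
  | Arm i j s =>
      match nth_error l i with
      | None => None
      | Some R =>
          if (i =? rel_index R) && (j <? ar R) && (1 <=? s) && (s <=? L) then
            if shape_eq_dec (σ x) (arm_shape i j (s - 1)) then
              Some (R, y, match s - 1 with
                          | 0 => [(cell x 0, cell y j)]
                          | S _ => map (fun k => (cell x k, cell y k)) (seq 0 (ar R))
                          end)
            else None
          else None
      end
  end.

Definition match_edb (σ : nat -> shape) (R : Rel) (xs : list nat)
    : option (Rel * nat * list (nat * nat)) :=
  match match_stretched σ R xs with
  | Some m => Some m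
  | None => if Rdec R eqR then match xs with [x; y] => match_arm σ x y | _ => None end else None
  end.

Definition tr_atom (σ : nat -> shape) (a : atom) : option (list atom) :=
  match a with
  | (inl R, xs) => option_map match_atoms (match_edb σ R xs)
  | (inr P, xs) => Some [(inr (idb_sym P (map σ xs)), args_vars σ xs)]
  end.

Definition translatable (σ : nat -> shape) (b : list atom) : bool :=
  forallb (fun a => if tr_atom σ a then true else false) b.

Definition tr_body (σ : nat -> shape) (b : list atom) : list atom :=
  flat_map (fun a => match tr_atom σ a with Some v => v | None => [] end) b.

Definition tr_rule (r : rule Rel) (σ : nat -> shape) : rule Rel :=
  mkRule _ (idb_sym (head_rel r) (map σ (head_vars r))) (args_vars σ (head_vars r))
    (tr_body σ (body r)).

Definition var_shapes (vs : list nat) (ts : list shape) (x : nat) : shape :=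
  nth (index_of Nat.eq_dec x vs) ts Center.

Definition all_shapes : list shape :=
  Center :: flat_map (fun i => flat_map (fun j => map (Arm i j) (seq 1 L))
                                 (seq 0 (S (list_max (map ar l)))))
              (seq 0 (length l)).

(* [same_sym] holds exactly of the pairs [(c, c)] with [c] in the active domain of
   [I]; it expresses the equalities between variables that rule bodies cannot. *)
Definition same_rules : list (rule Rel) :=
  flat_map (fun R => map (fun p => mkRule _ same_sym [p; p] [(inl R, seq 0 (ar R))])
                       (seq 0 (ar R))) l.

Definition tr_rules : list (rule Rel) :=
  flat_map (fun r =>
      flat_map (fun ts => let σ := var_shapes (rule_vars r) ts in
                          if translatable σ (body r) then [tr_rule r σ] else [])
        (lists_over all_shapes (length (rule_vars r))))
    (rules G).

Definition sim_program : program Rel :=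
  mkProgram _ sim_idb_ar (idb_sym (goal G) []) (same_rules ++ tr_rules).

Lemma shape_decode_code (τ : shape) : shape_decode (shape_code τ) = τ.
Proof. destruct τ; unfold shape_decode, shape_code; rewrite decode_code_list; reflexivity. Qed.

Lemma idb_sym_inj P τs P' τs' : idb_sym P τs = idb_sym P' τs' -> P = P' /\ τs = τs'.
Proof.
  intro H. apply code_list_inj in H. injection H as -> H. split; [reflexivity|].
  apply (f_equal (map shape_decode)) in H. rewrite !map_map in H.
  rewrite !(map_ext _ _ shape_decode_code), !map_id in H. exact H.
Qed.

Lemma idb_sym_neq_same P τs : idb_sym P τs <> same_sym.
Proof. intro H. apply code_list_inj in H. discriminate. Qed.

Lemma sim_idb_ar_idb_sym P τs : sim_idb_ar (idb_sym P τs) = list_sum (map width τs).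
Proof.
  unfold sim_idb_ar, idb_sym. rewrite decode_code_list, map_map.
  erewrite map_ext by (intro; rewrite shape_decode_code; reflexivity). reflexivity.
Qed.

Lemma sim_idb_ar_same : sim_idb_ar same_sym = 2.
Proof. unfold sim_idb_ar, same_sym. rewrite decode_code_list. reflexivity. Qed.

Lemma length_tuple_vars x w : length (tuple_vars x w) = w.
Proof. unfold tuple_vars. rewrite length_map, length_seq. reflexivity. Qed.

Lemma length_args_vars σ xs : length (args_vars σ xs) = list_sum (map width (map σ xs)).
Proof.
  induction xs as [|x xs IH]; [reflexivity|].
  simpl. rewrite length_app, IH. unfold node_vars. rewrite length_tuple_vars. reflexivity.
Qed.

Lemma decode_args_vars σ ν xs :
  decode_args (map σ xs) (map ν (args_vars σ xs)) = map (read_node ν σ) xs.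
Proof.
  induction xs as [|x xs IH]; [reflexivity|]. simpl. rewrite map_app.
  assert (Hw : length (map ν (node_vars σ x)) = width (σ x))
    by (rewrite length_map; apply length_tuple_vars).
  rewrite firstn_app, skipn_app, Hw, Nat.sub_diag, firstn_O, skipn_O, app_nil_r.
  rewrite <- Hw, firstn_all, skipn_all. exact (f_equal _ IH).
Qed.

Lemma in_sim_rules (r' : rule Rel) : In r' (rules sim_program) ->
  (exists R p, p < ar R /\ r' = mkRule _ same_sym [p; p] [(inl R, seq 0 (ar R))]) \/
  (exists r σ, In r (rules G) /\ translatable σ (body r) = true /\ r' = tr_rule r σ).
Proof.
  simpl. intro H. apply in_app_or in H as [H|H].
  - left. apply in_flat_map in H as [R [_ H]]. apply in_map_iff in H as [p [<- Hp]].
    apply in_seq in Hp. exists R, p. split; [lia|reflexivity].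
  - right. apply in_flat_map in H as [r [Hr H]]. apply in_flat_map in H as [ts [_ H]].
    simpl in H. destruct (translatable _ (body r)) eqn:Ht; [|destruct H].
    destruct H as [<-|[]]. eauto.
Qed.

Lemma tr_atom_translatable σ b a : translatable σ b = true -> In a b ->
  exists v, tr_atom σ a = Some v /\ incl v (tr_body σ b).
Proof.
  intros Hb Ha. unfold translatable in Hb. rewrite forallb_forall in Hb.
  specialize (Hb a Ha). destruct (tr_atom σ a) as [v|] eqn:Hv; [|discriminate].
  exists v. split; [reflexivity|]. intros z Hz. apply in_flat_map. exists a. rewrite Hv. auto.
Qed.

Lemma in_tr_body σ b z : In z (tr_body σ b) ->
  exists a v, In a b /\ tr_atom σ a = Some v /\ In z v.
Proof.
  intro Hz. apply in_flat_map in Hz as [a [Ha Hz]].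
  destruct (tr_atom σ a) as [v|] eqn:Hv; [eauto|destruct Hz].
Qed.

Lemma in_match_atoms R z links s zs : In (s, zs) (match_atoms (R, z, links)) ->
  (s = inl R /\ zs = tuple_vars z (ar R)) \/
  exists a b, In (a, b) links /\ s = inr same_sym /\ zs = [a; b].
Proof.
  intros [H|H]; [injection H as <- <-; auto|right].
  apply in_map_iff in H as [[a b] [H Hab]]. injection H as <- <-. eauto.
Qed.

(** * Soundness of the simulation *)

Lemma match_stretched_sound I σ ν R xs z links :
  length xs = ar R -> match_stretched σ R xs = Some (R, z, links) ->
  In (R, map ν (tuple_vars z (ar R))) I -> (forall a b, In (a, b) links -> ν a = ν b) ->
  In (R, map (read_node ν σ) xs) (stretch I).
Proof using l_full.
  intros Hlen Hm Hin Hlinks. unfold match_stretched in Hm.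
  destruct (list_eq_dec _ _ _) as [Hσ|]; [|discriminate]. injection Hm as <- <-.
  set (ys := map ν (tuple_vars (nth 0 xs 0) (ar R))) in *.
  assert (Hys : length ys = length xs) by (unfold ys; rewrite length_map, length_tuple_vars; lia).
  apply in_stretch. exists R, ys. split; [exact Hin|left]. unfold stretched_fact. f_equal.
  rewrite Hys, <- (map_nth_seq_comp (read_node ν σ) 0 xs). apply map_ext_in.
  intros m Hm. apply in_seq in Hm.
  assert (Hσm : σ (nth m xs 0) = Arm (rel_index R) m L).
  { apply (f_equal (fun τs => nth m τs Center)) in Hσ.
    rewrite (nth_map_lt σ xs m Center 0), (nth_map_seq (fun m => Arm (rel_index R) m L)) in Hσ
      by lia.
    exact Hσ. }
  unfold read_node, node_vars. rewrite Hσm, width_arm, arm_node_pos by lia. f_equal.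
  unfold ys, tuple_vars. rewrite !map_map. apply map_ext_in. intros k Hk. apply in_seq in Hk.
  apply Hlinks, in_flat_map. exists (nth m xs 0). split; [apply nth_In; lia|].
  apply (in_map (fun k => (cell (nth m xs 0) k, cell (nth 0 xs 0) k))), in_seq. lia.
Qed.

Lemma match_arm_sound I σ ν x y R z links :
  match_arm σ x y = Some (R, z, links) ->
  In (R, map ν (tuple_vars z (ar R))) I -> (forall a b, In (a, b) links -> ν a = ν b) ->
  In (eqR, [read_node ν σ x; read_node ν σ y]) (stretch I).
Proof using l_full.
  intros Hm Hin Hlinks. unfold match_arm in Hm.
  destruct (σ y) as [|i j s] eqn:Hy; [discriminate|].
  destruct (nth_error l i) as [Ri|] eqn:Hi; [|discriminate].
  destruct ((i =? rel_index Ri) && _ && _ && _) eqn:Hc; [|discriminate].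
  rewrite !andb_true_iff, Nat.eqb_eq, Nat.ltb_lt, !Nat.leb_le in Hc.
  destruct Hc as [[[-> Hj] Hs1] HsL].
  destruct (shape_eq_dec (σ x) _) as [Hx|]; [|discriminate]. injection Hm as <- <- <-.
  set (ys := map ν (tuple_vars y (ar Ri))) in *.
  assert (Hys : length ys = ar Ri) by (unfold ys; rewrite length_map, length_tuple_vars; lia).
  apply in_stretch. exists Ri, ys. split; [exact Hin|right]. exists j, s.
  split; [lia|]. split; [lia|]. unfold arm_fact. do 3 f_equal.
  - unfold read_node, node_vars. rewrite Hx. unfold arm_node.
    destruct (s - 1) as [|t] eqn:Es; simpl arm_shape.
    + f_equal. simpl. f_equal. rewrite (Hlinks _ _ (or_introl eq_refl)).
      unfold ys, tuple_vars. rewrite map_map, (nth_map_seq (fun k => ν (cell y k))) by lia.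
      reflexivity.
    + rewrite width_arm. f_equal. unfold ys, tuple_vars. rewrite !map_map.
      apply map_ext_in. intros k Hk. apply in_seq in Hk. apply Hlinks.
      apply (in_map (fun k => (cell x k, cell y k))), in_seq. lia.
  - f_equal. unfold read_node, node_vars. rewrite Hy, width_arm, arm_node_pos by lia. reflexivity.
Qed.

Lemma match_edb_sound I σ ν R xs R' z links :
  length xs = ar R -> match_edb σ R xs = Some (R', z, links) ->
  In (R', map ν (tuple_vars z (ar R'))) I -> (forall a b, In (a, b) links -> ν a = ν b) ->
  In (R, map (read_node ν σ) xs) (stretch I).
Proof using l_full.
  intros Hlen Hm. unfold match_edb in Hm.
  destruct (match_stretched σ R xs) as [m|] eqn:Hs.
  - injection Hm as ->. pose proof Hs as HR. unfold match_stretched in HR.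
    destruct (list_eq_dec _ _ _); [|discriminate]. injection HR as -> _ _.
    apply match_stretched_sound; assumption.
  - destruct (Rdec R eqR) as [->|]; [|discriminate].
    destruct xs as [|x [|y [|]]]; try discriminate. apply match_arm_sound. exact Hm.
Qed.

Lemma sim_derives_sound I Q args : derives sim_program I Q args ->
  (Q = same_sym -> exists a, args = [a; a]) /\
  (forall P τs, Q = idb_sym P τs -> derives G (stretch I) P (decode_args τs args)).
Proof using l_full G_wf.
  intro H. induction H as [r' ν Hr HE HI IH].
  apply in_sim_rules in Hr as [[R [p [_ ->]]]|[r [σ [Hr [Hb ->]]]]]; simpl.
  - split; [eauto|]. intros P τs E. symmetry in E. apply idb_sym_neq_same in E as [].
  - split; [intro E; apply idb_sym_neq_same in E as []|].
    intros P τs E. apply idb_sym_inj in E as [<- <-].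
    rewrite decode_args_vars. apply derives_rule; [exact Hr| |].
    + intros R xs Ha. destruct (tr_atom_translatable σ _ _ Hb Ha) as [v [Hv Hincl]].
      simpl in Hv. destruct (match_edb σ R xs) as [[[R' z] links]|] eqn:Hm; [|discriminate].
      injection Hv as <-. apply (match_edb_sound I σ ν R xs R' z links).
      * destruct G_wf as [_ Hwf]. exact (proj1 (proj2 (Hwf r Hr)) (inl R) xs Ha).
      * exact Hm.
      * apply HE, Hincl. left. reflexivity.
      * intros a b Hab. assert (Hs : In (same_atom a b) (tr_body σ (body r))).
        { apply Hincl. right. apply (in_map (fun '(a, b) => same_atom a b) _ (a, b) Hab). }
        destruct (proj1 (IH _ _ Hs) eq_refl) as [c Hc]. simpl in Hc. congruence.
    + intros P xs Ha. destruct (tr_atom_translatable σ _ _ Hb Ha) as [v [Hv Hincl]].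
      injection Hv as <-. rewrite <- decode_args_vars.
      exact (proj2 (IH _ _ (Hincl _ (or_introl eq_refl))) P _ eq_refl).
Qed.

(** * Completeness of the simulation *)

Lemma in_adom_stretch I a : in_adom (stretch I) a ->
  exists R ys j t, In (R, ys) I /\ j < length ys /\ t <= L /\ a = arm_node R ys j t.
Proof.
  intros [R [xs [Hin Ha]]]. apply in_stretch in Hin as [R0 [ys [Hin [HF|[j [s [Hj [Hs HF]]]]]]]].
  - injection HF as _ ->. apply in_map_iff in Ha as [j [<- Hj]]. apply in_seq in Hj.
    exists R0, ys, j, L. repeat split; auto; lia.
  - injection HF as _ ->. destruct Ha as [<-|[<-|[]]].
    + exists R0, ys, j, (s - 1). repeat split; auto; lia.
    + exists R0, ys, j, s. repeat split; auto; lia.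
Qed.

Lemma width_node_shape I a : wf_inst ar I -> in_adom (stretch I) a ->
  width (node_shape a) = length (node_tuple a).
Proof using l_full.
  intros HI Ha. apply in_adom_stretch in Ha as [R [ys [j [t [Hin [_ [_ ->]]]]]]].
  rewrite node_shape_arm_node, node_tuple_arm_node. destruct t; [reflexivity|].
  simpl arm_shape. rewrite width_arm. symmetry. exact (HI _ _ Hin).
Qed.

Lemma node_shape_in_all_shapes I a : wf_inst ar I -> in_adom (stretch I) a ->
  In (node_shape a) all_shapes.
Proof using l_full.
  intros HI Ha. apply in_adom_stretch in Ha as [R [ys [j [t [Hin [Hj [Ht ->]]]]]]].
  rewrite node_shape_arm_node. destruct t as [|t]; [left; reflexivity|right]. simpl arm_shape.
  apply in_flat_map. exists (rel_index R). split.
  { apply in_seq. split; [lia|]. apply nth_error_Some. rewrite nth_error_rel_index. discriminate. }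
  apply in_flat_map. exists j. split; [|apply in_map, in_seq; lia].
  apply in_seq. pose proof (le_list_max _ _ (in_map ar l R (l_full R))).
  rewrite (HI _ _ Hin) in Hj. lia.
Qed.

Lemma var_shapes_map (vs : list nat) (f : nat -> shape) (x : nat) :
  In x vs -> var_shapes vs (map f vs) x = f x.
Proof.
  intro Hx. unfold var_shapes. pose proof (nth_error_index_of Nat.eq_dec x vs Hx) as Hi.
  rewrite (nth_map_lt f vs _ Center 0), (nth_error_nth _ _ _ Hi); [reflexivity|].
  apply nth_error_Some. congruence.
Qed.

Definition sim_holds (I : instance Rel) (ν : nat -> nat) (z : atom) : Prop :=
  match z with
  | (inl R, zs) => In (R, map ν zs) I
  | (inr Q, zs) => derives sim_program I Q (map ν zs)
  end.

Lemma same_derivable I c : wf_inst ar I -> in_adom I c -> derives sim_program I same_sym [c; c].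
Proof using l_full.
  intros HI [R [ys [Hin Hc]]]. destruct (In_nth ys c 0 Hc) as [p [Hp <-]].
  pose proof (HI _ _ Hin) as Hlen.
  set (r := mkRule Rel same_sym [p; p] [(inl R, seq 0 (ar R))]).
  change (derives sim_program I (head_rel r) (map (fun v => nth v ys 0) (head_vars r))).
  apply derives_rule.
  - apply in_or_app. left. apply in_flat_map. exists R. split; [apply l_full|].
    apply (in_map (fun p => mkRule Rel same_sym [p; p] [(inl R, seq 0 (ar R))])), in_seq. lia.
  - intros R' xs [Hz|[]]. injection Hz as <- <-. rewrite <- Hlen, map_nth_seq. exact Hin.
  - intros Q xs [Hz|[]]. discriminate.
Qed.

Section Valuation.

Variables (I : instance Rel) (nu ν : nat -> nat) (σ : nat -> shape).
Hypothesis I_wf : wf_inst ar I.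
Hypothesis ν_cell : forall x k, ν (cell x k) = nth k (node_tuple (nu x)) 0.

Lemma map_node_vars x : σ x = node_shape (nu x) -> in_adom (stretch I) (nu x) ->
  map ν (node_vars σ x) = node_tuple (nu x).
Proof using ν_cell I_wf l_full.
  intros Hσ Hadom. unfold node_vars, tuple_vars. rewrite map_map.
  erewrite map_ext by (intro; apply ν_cell).
  rewrite Hσ, (width_node_shape I), map_nth_seq by assumption. reflexivity.
Qed.

Lemma match_stretched_complete R ys xs :
  In (R, ys) I -> (forall x, In x xs -> σ x = node_shape (nu x)) ->
  map nu xs = snd (stretched_fact R ys) ->
  exists z links, match_stretched σ R xs = Some (R, z, links) /\
    In (R, map ν (tuple_vars z (ar R))) I /\
    forall a b, In (a, b) links -> ν a = ν b /\ in_adom I (ν a).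
Proof using ν_cell I_wf.
  intros Hin Hσ HF. simpl in HF.
  pose proof (f_equal (@length nat) HF) as Hlen. rewrite !length_map, length_seq in Hlen.
  pose proof (I_wf _ _ Hin) as HarR.
  assert (Hx : forall m, m < length xs -> nu (nth m xs 0) = arm_node R ys m L).
  { intros m Hm. apply (f_equal (fun zs => nth m zs 0)) in HF.
    rewrite (nth_map_lt nu xs m 0 0), (nth_map_seq (fun j => arm_node R ys j L)) in HF by lia.
    exact HF. }
  assert (Htuple : forall x, In x xs -> node_tuple (nu x) = ys).
  { intros x Hxs. destruct (In_nth xs x 0 Hxs) as [m [Hm <-]].
    rewrite Hx, node_tuple_arm_node by exact Hm. reflexivity. }
  unfold match_stretched. destruct (list_eq_dec _ _ _) as [_|Hne].
  - eexists _, _. split; [reflexivity|]. split.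
    + destruct xs as [|x0 xs'].
      * destruct ys; [|discriminate]. rewrite <- HarR. exact Hin.
      * unfold tuple_vars. rewrite map_map.
        erewrite map_ext by (intro; apply ν_cell). simpl nth.
        rewrite Htuple, <- HarR, map_nth_seq by (left; reflexivity). exact Hin.
    + intros a b Hab. apply in_flat_map in Hab as [x [Hxs Hab]].
      apply in_map_iff in Hab as [k [Hab Hk]]. apply in_seq in Hk. injection Hab as <- <-.
      assert (Hx0 : In (nth 0 xs 0) xs) by (destruct xs; [destruct Hxs|left; reflexivity]).
      rewrite !ν_cell, !Htuple by assumption. split; [reflexivity|].
      exists R, ys. split; [exact Hin|]. apply nth_In. lia.
  - exfalso. apply Hne. rewrite <- (map_nth_seq_comp σ 0 xs). apply map_ext_in.
    intros m Hm. apply in_seq in Hm. rewrite Hσ, Hx by (try apply nth_In; lia).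
    rewrite node_shape_arm_node. apply arm_shape_pos. lia.
Qed.

Lemma match_arm_complete x y R ys j s :
  In (R, ys) I -> j < length ys -> 1 <= s <= L ->
  σ x = node_shape (nu x) -> σ y = node_shape (nu y) ->
  nu x = arm_node R ys j (s - 1) -> nu y = arm_node R ys j s ->
  exists links, match_arm σ x y = Some (R, y, links) /\
    In (R, map ν (tuple_vars y (ar R))) I /\
    forall a b, In (a, b) links -> ν a = ν b /\ in_adom I (ν a).
Proof using ν_cell l_full I_wf.
  intros Hin Hj Hs Hσx Hσy Hx Hy. pose proof (I_wf _ _ Hin) as HarR.
  assert (Hyt : map ν (tuple_vars y (ar R)) = ys).
  { unfold tuple_vars. rewrite map_map. erewrite map_ext by (intro; apply ν_cell).
    rewrite Hy, node_tuple_arm_node. destruct s; [lia|].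
    rewrite <- HarR, map_nth_seq. reflexivity. }
  unfold match_arm. rewrite Hσy, Hy, node_shape_arm_node, arm_shape_pos, nth_error_rel_index
    by lia.
  rewrite Nat.eqb_refl. replace (j <? ar R) with true by (symmetry; apply Nat.ltb_lt; lia).
  replace (1 <=? s) with true by (symmetry; apply Nat.leb_le; lia).
  replace (s <=? L) with true by (symmetry; apply Nat.leb_le; lia).
  rewrite Hσx, Hx, node_shape_arm_node. simpl andb.
  destruct (shape_eq_dec _ _) as [_|]; [|contradiction].
  eexists. split; [reflexivity|]. split; [rewrite Hyt; exact Hin|].
  intros a b Hab.
  assert (Hlink : exists k, k < length ys /\ ν a = nth k ys 0 /\ ν b = nth k ys 0).
  { revert Hab. destruct (s - 1) as [|t] eqn:Es; intro Hab.
    - destruct Hab as [Hab|[]]. injection Hab as <- <-. exists j.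
      rewrite !ν_cell, Hx, Hy, !node_tuple_arm_node. destruct s as [|[|]]; [lia| |lia]. auto.
    - apply in_map_iff in Hab as [k [Hab Hk]]. apply in_seq in Hk. injection Hab as <- <-.
      exists k. rewrite !ν_cell, Hx, Hy, !node_tuple_arm_node.
      destruct s; [lia|]. repeat split; lia. }
  destruct Hlink as [k [Hk [-> ->]]]. split; [reflexivity|].
  exists R, ys. split; [exact Hin|]. apply nth_In, Hk.
Qed.

Lemma tr_edb_complete R xs :
  (forall x, In x xs -> σ x = node_shape (nu x)) -> In (R, map nu xs) (stretch I) ->
  exists v, tr_atom σ (inl R, xs) = Some v /\ forall z, In z v -> sim_holds I ν z.
Proof using ν_cell l_full I_wf.
  intros Hσ HF.
  assert (Hm : exists R' z links, match_edb σ R xs = Some (R', z, links) /\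
     In (R', map ν (tuple_vars z (ar R'))) I /\
     forall a b, In (a, b) links -> ν a = ν b /\ in_adom I (ν a)).
  { unfold match_edb.
    apply in_stretch in HF as [R0 [ys [Hin [HF|[j [s [Hj [Hs HF]]]]]]]].
    - injection HF as <- HF.
      destruct (match_stretched_complete R ys xs Hin Hσ HF) as [z [links [-> Hrest]]]. eauto.
    - injection HF as -> HF. destruct xs as [|x [|y [|]]]; try discriminate.
      injection HF as Hx Hy.
      assert (Hσx : σ x = node_shape (nu x)) by (apply Hσ; left; reflexivity).
      assert (Hσy : σ y = node_shape (nu y)) by (apply Hσ; right; left; reflexivity).
      replace (match_stretched σ eqR [x; y]) with (@None (Rel * nat * list (nat * nat))).
      + destruct (Rdec eqR eqR) as [_|]; [|contradiction].
        destruct (match_arm_complete x y R0 ys j s Hin Hj Hs Hσx Hσy Hx Hy)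
          as [links [-> Hrest]]. eauto.
      + unfold match_stretched. destruct (list_eq_dec _ _ _) as [E|]; [|reflexivity].
        injection E as E _. rewrite Hσx, Hx, node_shape_arm_node in E.
        destruct (s - 1) as [|t] eqn:Es; [discriminate|]. injection E as _ _ E. lia. }
  destruct Hm as [R' [z [links [Hm [Hin Hlinks]]]]].
  simpl. rewrite Hm. eexists. split; [reflexivity|].
  intros [Q zs] Hz. apply in_match_atoms in Hz as [[-> ->]|[a [b [Hab [-> ->]]]]]; [exact Hin|].
  destruct (Hlinks a b Hab) as [Hab' Ha]. simpl. rewrite <- Hab'.
  apply same_derivable; assumption.
Qed.

End Valuation.

Lemma tr_rule_in_sim r ts : In r (rules G) -> (forall τ, In τ ts -> In τ all_shapes) ->
  length ts = length (rule_vars r) -> translatable (var_shapes (rule_vars r) ts) (body r) = true ->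
  In (tr_rule r (var_shapes (rule_vars r) ts)) (rules sim_program).
Proof.
  intros Hr Hts Hlen Hb. apply in_or_app. right. apply in_flat_map. exists r. split; [exact Hr|].
  apply in_flat_map. exists ts. rewrite <- Hlen. split; [apply in_lists_over, Hts|].
  simpl. rewrite Hb. left. reflexivity.
Qed.

Lemma tr_body_complete I ν σ b :
  (forall a, In a b -> exists v, tr_atom σ a = Some v /\ forall z, In z v -> sim_holds I ν z) ->
  translatable σ b = true /\ forall z, In z (tr_body σ b) -> sim_holds I ν z.
Proof.
  intro Hatoms. split.
  - apply forallb_forall. intros a Ha. destruct (Hatoms a Ha) as [v [-> _]]. reflexivity.
  - intros z Hz. destruct (in_tr_body _ _ _ Hz) as [a [v [Ha [Hv Hzv]]]].
    destruct (Hatoms a Ha) as [v' [Hv' Hholds]]. rewrite Hv in Hv'. injection Hv' as <-.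
    exact (Hholds _ Hzv).
Qed.

Definition tuple_valuation (nu : nat -> nat) (v : nat) : nat :=
  match decode_list v with [x; k] => nth k (node_tuple (nu x)) 0 | _ => 0 end.

Lemma tuple_valuation_cell nu x k : tuple_valuation nu (cell x k) = nth k (node_tuple (nu x)) 0.
Proof. unfold tuple_valuation, cell. rewrite decode_code_list. reflexivity. Qed.

Lemma sim_derives_complete I P args : wf_inst ar I -> derives G (stretch I) P args ->
  derives sim_program I (idb_sym P (map node_shape args)) (flat_map node_tuple args).
Proof using l_full G_wf.
  intros HI H. induction H as [r nu Hr HE HIDB IH].
  pose proof (rule_vars_in_adom ar G _ r nu G_wf Hr HE HIDB) as Hadom.
  set (vs := rule_vars r) in Hadom.
  set (σ := var_shapes vs (map (fun x => node_shape (nu x)) vs)).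
  assert (Hσ : forall x, In x vs -> σ x = node_shape (nu x))
    by (intros x Hx; exact (var_shapes_map vs (fun x => node_shape (nu x)) x Hx)).
  set (ν := tuple_valuation nu).
  assert (Hargs : forall xs, incl xs vs ->
            map ν (args_vars σ xs) = flat_map node_tuple (map nu xs) /\
            map σ xs = map node_shape (map nu xs)).
  { intros xs Hxs. rewrite map_map. split; [|apply map_ext_in; intros x Hx; apply Hσ, Hxs, Hx].
    unfold args_vars. rewrite map_flat_map, flat_map_map. apply flat_map_ext_in. intros x Hx.
    apply (map_node_vars I nu ν σ HI (tuple_valuation_cell nu)); [apply Hσ|apply Hadom];
      apply Hxs, Hx. }
  assert (Hbody_vars : forall s xs, In (s, xs) (body r) -> incl xs vs)
    by (intros s xs Ha x Hx; apply in_or_app; right; apply in_flat_map; exists (s, xs); auto).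
  destruct (tr_body_complete I ν σ (body r)) as [Hb Hholds].
  { intros [[R|Q] xs] Ha.
    - apply (tr_edb_complete I nu ν σ HI (tuple_valuation_cell nu)); [|exact (HE _ _ Ha)].
      intros x Hx. apply Hσ, (Hbody_vars _ _ Ha), Hx.
    - eexists. split; [reflexivity|]. intros z [<-|[]]. simpl.
      destruct (Hargs xs (Hbody_vars _ _ Ha)) as [-> ->]. exact (IH Q xs Ha). }
  destruct (Hargs (head_vars r)) as [<- <-]; [intros x Hx; apply in_or_app; left; exact Hx|].
  change (derives sim_program I (head_rel (tr_rule r σ)) (map ν (head_vars (tr_rule r σ)))).
  apply derives_rule; [|intros R zs Hz; exact (Hholds _ Hz)|intros Q zs Hz; exact (Hholds _ Hz)].
  apply tr_rule_in_sim; [exact Hr| |apply length_map|exact Hb].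
  intros τ Hτ. apply in_map_iff in Hτ as [x [<- Hx]]. apply (node_shape_in_all_shapes I); auto.
Qed.

(** * Well-formedness of the simulating program *)

Lemma tr_body_atom_cases σ b s zs : In (s, zs) (tr_body σ b) ->
  (exists R, s = inl R /\ length zs = ar R) \/ (s = inr same_sym /\ length zs = 2) \/
  (exists P xs, In (inr P, xs) b /\ s = inr (idb_sym P (map σ xs)) /\ zs = args_vars σ xs).
Proof.
  intro Hz. destruct (in_tr_body _ _ _ Hz) as [[[R|P] xs] [v [Ha [Hv Hzv]]]]; simpl in Hv.
  - destruct (match_edb σ R xs) as [m|]; [|discriminate]. injection Hv as <-.
    destruct m as [[R' z] links].
    apply in_match_atoms in Hzv as [[-> ->]|[a [b' [_ [-> ->]]]]]; [|auto].
    left. exists R'. split; [reflexivity|apply length_tuple_vars].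
  - injection Hv as <-. destruct Hzv as [Hzv|[]]. injection Hzv as <- <-. eauto 7.
Qed.

Lemma match_edb_covers σ R xs m x v : match_edb σ R xs = Some m -> In x xs ->
  In v (node_vars σ x) -> exists s zs, In (s, zs) (match_atoms m) /\ In v zs.
Proof using l_full.
  intros Hm Hx Hv. unfold node_vars, tuple_vars in Hv.
  apply in_map_iff in Hv as [k [<- Hk]]. apply in_seq in Hk.
  assert (Hlink : forall R' z links a b, In (a, b) links ->
            In (same_atom a b) (match_atoms (R', z, links)))
    by (intros R' z links a b Hab; right; exact (in_map (fun '(a, b) => same_atom a b) _ _ Hab)).
  unfold match_edb in Hm. destruct (match_stretched σ R xs) as [m'|] eqn:Hs.
  - injection Hm as <-. unfold match_stretched in Hs.
    destruct (list_eq_dec _ _ _) as [Hσ|]; [|discriminate]. injection Hs as <-.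
    assert (Hσx : In (σ x) (map σ xs)) by (apply in_map, Hx).
    rewrite Hσ in Hσx. apply in_map_iff in Hσx as [m [Hσx _]].
    rewrite <- Hσx, width_arm in Hk. eexists _, _. split; [apply Hlink|left; reflexivity].
    apply in_flat_map. exists x. split; [exact Hx|].
    apply (in_map (fun k => (cell x k, cell (nth 0 xs 0) k))), in_seq. lia.
  - destruct (Rdec R eqR); [|discriminate].
    destruct xs as [|x0 [|y [|]]]; try discriminate. unfold match_arm in Hm.
    destruct (σ y) as [|i j s] eqn:Hy; [discriminate|].
    destruct (nth_error l i) as [Ri|] eqn:Hi; [|discriminate].
    destruct (_ && _); [|discriminate].
    destruct (shape_eq_dec (σ x0) _) as [Hx0|]; [|discriminate]. injection Hm as <-.
    destruct Hx as [<-|[<-|[]]].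
    + rewrite Hx0 in Hk. revert Hk. destruct (s - 1) as [|t]; intro Hk; simpl in Hk.
      * replace k with 0 by lia. eexists _, _. split; [apply Hlink; left; reflexivity|].
        left. reflexivity.
      * rewrite Hi in Hk. eexists _, _.
        split; [apply (Hlink _ _ _ (cell x0 k) (cell y k))|left; reflexivity].
        apply (in_map (fun k => (cell x0 k, cell y k))), in_seq. lia.
    + rewrite Hy in Hk. simpl in Hk. rewrite Hi in Hk. eexists _, _. split; [left; reflexivity|].
      apply in_map, in_seq. lia.
Qed.

Lemma wf_sim_program : wf_program ar sim_program.
Proof using l_full G_wf.
  destruct G_wf as [_ Hrules]. split; [apply sim_idb_ar_idb_sym|].
  intros r' Hr'. apply in_sim_rules in Hr' as [[R [p [Hp ->]]]|[r [σ [Hr [Hb ->]]]]].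
  - split; [apply sim_idb_ar_same|]. split; [|split].
    + intros s xs [Hz|[]]. injection Hz as <- <-. apply length_seq.
    + intros s xs [Hz|[]]. injection Hz as <- <-. discriminate.
    + intros x Hx. exists (inl R), (seq 0 (ar R)). split; [left; reflexivity|].
      destruct Hx as [<-|[<-|[]]]; apply in_seq; lia.
  - destruct (Hrules r Hr) as [_ [_ [Hnot_goal Hsafe]]]. split; [|split; [|split]].
    + simpl. rewrite length_args_vars, sim_idb_ar_idb_sym. reflexivity.
    + intros s zs Hz.
      destruct (tr_body_atom_cases _ _ _ _ Hz) as [[R [-> ->]]|[[-> ->]|[P [xs [_ [-> ->]]]]]].
      * reflexivity.
      * symmetry. apply sim_idb_ar_same.
      * simpl. rewrite length_args_vars, sim_idb_ar_idb_sym. reflexivity.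
    + intros s zs Hz ->. change (goal sim_program) with (idb_sym (goal G) []) in Hz.
      destruct (tr_body_atom_cases _ _ _ _ Hz) as [[R [E _]]|[[E _]|[P [xs [Ha [E _]]]]]].
      * discriminate.
      * apply (idb_sym_neq_same (goal G) []). congruence.
      * assert (E' : idb_sym P (map σ xs) = idb_sym (goal G) []) by congruence.
        apply idb_sym_inj in E' as [-> _]. exact (Hnot_goal _ _ Ha eq_refl).
    + intros v Hv. apply in_flat_map in Hv as [x [Hx Hv]].
      destruct (Hsafe x Hx) as [[R|P] [xs [Ha Hxa]]];
        destruct (tr_atom_translatable σ _ _ Hb Ha) as [u [Hu Hincl]]; simpl in Hu.
      * destruct (match_edb σ R xs) as [m|] eqn:Hm; [|discriminate]. injection Hu as <-.
        destruct (match_edb_covers σ R xs m x v Hm Hxa Hv) as [s [zs [Hz Hvz]]].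
        exists s, zs. split; [apply Hincl, Hz|exact Hvz].
      * injection Hu as <-. eexists _, _. split; [apply Hincl; left; reflexivity|].
        apply in_flat_map. eauto.
Qed.

Lemma models_sim_program I : wf_inst ar I -> models I sim_program <-> models (stretch I) G.
Proof using l_full G_wf.
  intro HI. unfold models. split; intro H.
  - exact (proj2 (sim_derives_sound I _ _ H) (goal G) [] eq_refl).
  - exact (sim_derives_complete I (goal G) [] HI H).
Qed.

End Stretch.

Theorem lemma6p2 (Rel : Type) (ar : Rel -> nat) (eqR : Rel)
  (Hfin : exists l : list Rel, forall R, In R l)
  (Heq : ar eqR = 2)
  (S : list (instance Rel))
  (HS : forall T, In T S -> wf_inst ar T /\ has_equality eqR T)
  (g : nat) :
  DLog_rewritable_girth ar S g -> DLog_rewritable ar S.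
Proof.
  intros [G [G_wf HG]]. destruct Hfin as [l l_full].
  pose (Rdec := fun R R' : Rel => excluded_middle_informative (R = R')).
  assert (HS_eq : forall T, In T S -> has_equality eqR T) by (intros T HT; apply HS, HT).
  exists (sim_program ar eqR l Rdec g G).
  split; [exact (wf_sim_program ar eqR l Rdec l_full g G G_wf)|].
  intros I HI. rewrite (models_sim_program ar eqR l Rdec l_full g G G_wf I HI).
  rewrite <- (coCSP_stretch eqR l Rdec g S I HS_eq).
  apply HG; [exact (wf_stretch ar eqR l Rdec g I Heq HI)|].
  exact (girth_stretch eqR l Rdec l_full g I).
Qed.
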